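(* Let $(d_i)_{i\ge1}$ be an infinite alternate Lyndon word, $M$ its alternate Lyndon system, $L_M$ its language and $H_n$ the number of words of length $n$ in $L_M$. Let $A(n)=a_1\cdots a_n$ and $B(n)=b_1\cdots b_n$ be two words of length $n$ in $L_M$ with $A(n)\prec B(n)$, and let $\Gamma_{A,B}(n)$ be the cardinality of the set of words $X=x_1\cdots x_n\in L_M$ of length $n$ with $A(n)\preceq X\preceq B(n)$. Then $$\Gamma_{A,B}(n)=\sum_{i=1}^{n}(-1)^i(b_i-a_i)H_{n-i}+1.$$
   Context: Alternate order: for two words $x=x_1x_2\cdots$, $y=y_1y_2\cdots$ (both infinite, or both finite of the same length) over a finite alphabet $\{0,\dots,d\}$, $x\prec y$ iff there is $k$ with $x_i=y_i$ for all $i<k$ and $(-1)^k(x_k-y_k)<0$; $x\preceq y$ iff $x=y$ or $x\prec y$. An alternate Lyndon word is an infinite word $(d_i)_{i\ge1}$ with $d_1d_2\cdots\preceq d_nd_{n+1}\cdots$ for all $n\ge1$. Its alternate Lyndon system $M$ is the set of infinite words $x_1x_2\cdots$ over $\{0,\dots,d_1\}$ with $d_1d_2\cdots\preceq x_kx_{k+1}\cdots$ for all $k\ge1$; $L_M$ is the set of finite factors of elements of $M$; $H_0=1$. *)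

From HB Require Import structures.
From mathcomp Require Import all_boot all_order all_algebra.
From Stdlib Require Import ClassicalEpsilon.
Set Implicit Arguments. Unset Strict Implicit. Unset Printing Implicit Defensive.

(* Words are 0-indexed: index i corresponds to position i+1 of the paper.
   Hence (-1)^(position) = -1 iff the index is even.
   x < y (alternate) at first difference index k:
     index k even (position odd):  x_k > y_k
     index k odd  (position even): x_k < y_k *)

Definition alt_lt_inf (x y : nat -> nat) : Prop :=
  exists k, (forall i, i < k -> x i = y i) /\
            (if odd k then x k < y k else y k < x k).

Definition alt_le_inf (x y : nat -> nat) : Prop :=
  (forall i, x i = y i) \/ alt_lt_inf x y.

Definition shift (x : nat -> nat) (n : nat) : nat -> nat := fun i => x (n + i).

Definition alt_lt_fin (x y : seq nat) : Prop :=
  size x = size y /\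
  exists k, k < size x /\ (forall i, i < k -> nth 0 x i = nth 0 y i) /\
            (if odd k then nth 0 x k < nth 0 y k else nth 0 y k < nth 0 x k).

Definition alt_le_fin (x y : seq nat) : Prop := x = y \/ alt_lt_fin x y.

Definition alt_lyndon (d : nat -> nat) : Prop :=
  forall n, alt_le_inf d (shift d n).

Definition inM (d : nat -> nat) (x : nat -> nat) : Prop :=
  (forall i, x i <= d 0) /\ (forall k, alt_le_inf d (shift x k)).

Definition inL (d : nat -> nat) (w : seq nat) : Prop :=
  exists x, inM d x /\ exists j, w = mkseq (fun i => x (j + i)) (size w).

Definition pdec (P : Prop) : bool :=
  if excluded_middle_informative P then true else false.

(* H_n : number of words of length n in L_M (all letters of such words are <= d_1) *)
Definition Hcount (d : nat -> nat) (n : nat) : nat :=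
  #|[set w : n.-tuple 'I_((d 0).+1) | pdec (inL d (map val w))]|.

Definition Gamma (d : nat -> nat) (A B : seq nat) (n : nat) : nat :=
  #|[set w : n.-tuple 'I_((d 0).+1) |
      pdec (inL d (map val w) /\ alt_le_fin A (map val w) /\ alt_le_fin (map val w) B)]|.

From HB Require Import structures.
From mathcomp Require Import all_boot all_order all_algebra.
From Stdlib Require Import ClassicalEpsilon.
From mathcomp Require Import zify ring lra.

(* Write N_m(X) for the number of words of L_M of length m that are ⪯ X, so that
   Γ_{A,B}(n) = N_n(B) - N_n(A) + 1.  A word c w lies in L_M iff w does and either
   c < d_1, or c = d_1 and w ⪯ d_2 ⋯ d_{|w|+1} (for w = d_2 ⋯ d_{|w|+1} itself this
   uses that d is an alternate Lyndon word, i.e. d ∈ M).  Sorting the words ⪯ x X by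
   their first letter therefore gives
     N_{m+1}(x X) + N_m(X) = (d_1 - x) H_m + N_m(d_2 ⋯ d_{m+1}) + 1,
   in which x occurs only through -x H_m.  By induction on m, N_m(X) equals the
   alternating sum Σ_i (-1)^i x_i H_{m-i} up to a constant depending only on m, and
   that constant cancels in Γ_{A,B}(n). *)

Set Implicit Arguments.
Unset Strict Implicit.
Unset Printing Implicit Defensive.

Lemma pdecP (P : Prop) : reflect P (pdec P).
Proof. by rewrite /pdec; case: excluded_middle_informative => h; constructor. Qed.

Definition nwords (D n : nat) (P : pred (seq nat)) : nat :=
  \sum_(w : n.-tuple 'I_D.+1) P (map val w).

Section WordCount.

Variable D : nat.

Lemma card_nwords n (P : pred (seq nat)) :
  #|[set w : n.-tuple 'I_D.+1 | P (map val w)]| = nwords D n P.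
Proof.
by rewrite -sum1_card big_mkcond; apply: eq_bigr => w _; rewrite inE; case: (P _).
Qed.

Lemma nwords_ext n (P Q : pred (seq nat)) :
  (forall w, size w = n -> P w = Q w) -> nwords D n P = nwords D n Q.
Proof. by move=> PQ; apply: eq_bigr => w _; rewrite PQ // size_map size_tuple. Qed.

Lemma nwords_add n (P1 P2 P3 P4 : pred (seq nat)) :
  (forall w, size w = n -> P1 w + P2 w = P3 w + P4 w) ->
  nwords D n P1 + nwords D n P2 = nwords D n P3 + nwords D n P4.
Proof.
move=> hP; rewrite /nwords -!big_split /=; apply: eq_bigr => w _.
by rewrite hP // size_map size_tuple.
Qed.

Lemma nwords_pred0 n : nwords D n pred0 = 0.
Proof. exact: big1. Qed.

Lemma nwords_pred1 X : all (leq^~ D) X -> nwords D (size X) (pred1 X) = 1.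
Proof.
move=> XD; have sizeX : size (map (@inord D) X) == size X by rewrite size_map.
pose t := Tuple sizeX.
have tX : map val t = X.
  rewrite /= -map_comp -[RHS]map_id; apply/eq_in_map => a aX /=.
  by rewrite inordK //; move/allP: XD => /(_ a aX).
rewrite /nwords (bigD1 t) //= tX eqxx big1 // => w wt.
case: eqP => //= wX; move/eqP: wt; case; apply: val_inj.
by apply: (inj_map val_inj); rewrite wX tX.
Qed.

Lemma nwords_cons n P :
  nwords D n.+1 P = \sum_(c < D.+1) nwords D n (fun w => P (val c :: w)).
Proof.
rewrite /nwords pair_big /=.
rewrite (reindex (fun p : 'I_D.+1 * n.-tuple 'I_D.+1 => [tuple of p.1 :: p.2])) //=.
exists (fun w => (thead w, [tuple of behead w])).
  by move=> -[c w] _ /=; rewrite theadE; congr pair; apply: val_inj.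
by move=> w _ /=; rewrite [in RHS](tuple_eta w).
Qed.

End WordCount.

(* [flip] holds at the even positions of the paper's 1-based numbering; at odd
   positions the larger letter gives the smaller word. *)
Fixpoint alt_cmp (flip : bool) (x y : seq nat) : bool :=
  match x, y with
  | [::], [::] => true
  | a :: u, b :: v => (if flip then a < b else b < a) || (a == b) && alt_cmp (~~ flip) u v
  | _, _ => false
  end.

Lemma alt_cmp_flip f x y : alt_cmp (~~ f) x y = alt_cmp f y x.
Proof. by elim: x y f => [|a u IH] [|b v] [] //=; rewrite -IH eq_sym. Qed.

Definition altle (x y : seq nat) : bool := (size x == size y) && alt_cmp false x y.

Lemma altle_cons a u b v :
  altle (a :: u) (b :: v) = (size u == size v) && ((b < a) || (a == b) && altle v u).
Proof.
rewrite /altle /= eqSS -[true]/(~~ false) alt_cmp_flip.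
by case: eqP => //= ->; rewrite eqxx.
Qed.

Lemma altle_refl x : altle x x.
Proof. by elim: x => [|a u IH] //; rewrite altle_cons !eqxx IH orbT. Qed.

Lemma altle_total x y : size x = size y -> altle x y || altle y x.
Proof.
elim: x y => [|a u IH] [|b v] // [] uv; rewrite !altle_cons uv eqxx /=.
by have := IH _ uv; case: ltngtP => //= _; rewrite orbC.
Qed.

Lemma altle_anti x y : altle x y -> altle y x -> x = y.
Proof.
elim: x y => [|a u IH] [|b v] //; rewrite !altle_cons.
case: ltngtP => [_|_|->]; rewrite ?andbF // => /andP[_ vu] /andP[_ uv].
by rewrite (IH _ uv vu).
Qed.

Lemma altle_trans x y z : altle x y -> altle y z -> altle x z.
Proof.
move: {2}(size x) (erefl (size x)) => n.
elim: n x y z => [|n IH] [|a u] [|b v] [|c w] // [su]; rewrite !altle_cons.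
move=> /andP[/eqP uv xy] /andP[/eqP vw yz]; rewrite uv vw eqxx /=.
case/orP: xy => [ba|/andP[/eqP ab vu]]; case/orP: yz => [cb|/andP[/eqP bc wv]].
- by rewrite (ltn_trans cb ba).
- by rewrite -bc ba.
- by rewrite ab cb.
- by rewrite ab bc eqxx (IH _ _ _ _ wv vu) ?orbT // -vw -uv.
Qed.

Lemma alt_lt_fin_cons a u b v :
  alt_lt_fin (a :: u) (b :: v) <->
  size u = size v /\ (b < a \/ a = b /\ alt_lt_fin v u).
Proof.
split.
- move=> [/= [uv] [[|k] [hk [eq_pre hk_lt]]]]; split => //; first by left.
  right; split; first exact: (eq_pre 0).
  split=> //; exists k; split; first by rewrite -uv.
  split; first by move=> i hi; symmetry; apply: (eq_pre i.+1).
  by move: hk_lt => /=; case: (odd k).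
- move=> [uv [ba|[<- [vu [k [hk [eq_pre hk_lt]]]]]]].
  + by split; [rewrite /= uv | exists 0].
  split; first by rewrite /= uv.
  exists k.+1; split; first by rewrite /= -vu.
  split; first by case=> [|i] //= hi; symmetry; apply: eq_pre.
  by move: hk_lt => /=; case: (odd k).
Qed.

Lemma alt_lt_finP x y : alt_lt_fin x y <-> altle x y /\ x <> y.
Proof.
move: {2}(size x) (erefl (size x)) => n.
elim: n x y => [|n IH] [|a u] [|b v] //= su; try by split=> [[]|[]].
  by split=> [[_ [k []]]|[]].
case: su => su; rewrite alt_lt_fin_cons altle_cons; split.
- move=> [uv [ba|[<- /(IH _ _ _) []]]]; rewrite ?uv ?eqxx /=.
  + by rewrite ba; split=> // -[ab]; rewrite ab ltnn in ba.
  + by rewrite -uv.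
  + by move=> vu neq; rewrite vu orbT; split=> // -[vu']; apply: neq.
- move=> [/andP[/eqP uv /orP[ba|/andP[/eqP ab vu]]] neq]; split=> //; first by left.
  right; split=> //; apply/(IH v u (etrans (esym uv) su)); split=> // vu'.
  by apply: neq; rewrite ab vu'.
Qed.

Lemma alt_le_finP x y : alt_le_fin x y <-> altle x y.
Proof.
split; first by case=> [->|/alt_lt_finP []]; first exact: altle_refl.
move=> xy; case: (eqVneq x y) => [->|neq]; first by left.
by right; apply/alt_lt_finP; split=> //; apply/eqP.
Qed.

Lemma altle_between A B w : altle A B -> size w = size A ->
  altle w B + (w == A) = (altle A w && altle w B) + altle w A.
Proof.
move=> AB wA; case: eqP => [->|neq]; first by rewrite altle_refl AB.
have [wA'|Aw] := orP (altle_total wA).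
- rewrite wA' (altle_trans wA' AB); case: (boolP (altle A w)) => // Aw.
  by case: neq; apply: altle_anti.
- case: (boolP (altle w A)) => [wA'|_]; first by case: neq; apply: altle_anti.
  by rewrite Aw /= !addn0.
Qed.

Lemma altle_split X w : size w = size X -> altle w X + altle X w = 1 + (w == X).
Proof.
move=> wX; case: eqP => [->|neq]; first by rewrite altle_refl.
have [wX'|Xw] := orP (altle_total wX).
- case: (boolP (altle X w)) => [Xw|]; first by case: neq; apply: altle_anti.
  by rewrite wX'.
- case: (boolP (altle w X)) => [wX'|]; first by case: neq; apply: altle_anti.
  by rewrite Xw.
Qed.

Section Language.

Variable d : nat -> nat.

Definition inLb : pred (seq nat) := fun w => pdec (inL d w).

Lemma inLbP w : reflect (inL d w) (inLb w).
Proof. exact: pdecP. Qed.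

Lemma inL_nth w : inL d w <->
  exists x, inM d x /\ exists j, forall i, i < size w -> nth 0 w i = x (j + i).
Proof.
split=> -[x [Mx [j wx]]]; exists x; split=> //; exists j.
  by move=> i hi; rewrite wx nth_mkseq // -wx.
by apply: (@eq_from_nth _ 0) => [|i hi]; rewrite ?size_mkseq // nth_mkseq // wx.
Qed.

Lemma inL_letter_bound w : inL d w -> all (leq^~ (d 0)) w.
Proof.
move/inL_nth=> [x [[x_le _] [j wx]]]; apply/allP => a aw.
by rewrite -(nth_index 0 aw) wx ?index_mem.
Qed.

Lemma inL_behead c w : inL d (c :: w) -> inL d w.
Proof.
move/inL_nth=> [x [Mx [j wx]]]; apply/inL_nth; exists x; split=> //; exists j.+1 => i hi.
by rewrite addSnnS -wx.
Qed.

Lemma alt_le_inf_eq y y' : y =1 y' -> alt_le_inf d y -> alt_le_inf d y'.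
Proof.
move=> yy' [dy|[k [dy dy_lt]]]; first by left=> i; rewrite dy yy'.
by right; exists k; rewrite -yy'; split=> // i hi; rewrite -yy' dy.
Qed.

Definition cons_suffix (c : nat) (x : nat -> nat) (j : nat) : nat -> nat :=
  fun k => if k is k'.+1 then x (j + k') else c.

Lemma inM_cons_suffix c x j : inM d x -> c <= d 0 ->
  alt_le_inf d (cons_suffix c x j) -> inM d (cons_suffix c x j).
Proof.
move=> [x_le Mx] c_le dcx; split=> [[|k] //|[|k]]; first exact: x_le.
  exact: alt_le_inf_eq dcx.
by apply: alt_le_inf_eq (Mx (j + k)) => i; rewrite /shift /= addnA.
Qed.

Lemma inL_cons_lt c w : c < d 0 -> inL d w -> inL d (c :: w).
Proof.
move=> c_lt /inL_nth[x [Mx [j wx]]]; apply/inL_nth; exists (cons_suffix c x j); split.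
  by apply: inM_cons_suffix => //; [exact: ltnW | right; exists 0].
by exists 0; case=> [|i] //= hi; rewrite wx.
Qed.

Definition dtail (m : nat) : seq nat := mkseq (fun i => d i.+1) m.

Lemma inL_cons_d0_altle w : inL d (d 0 :: w) -> altle w (dtail (size w)).
Proof.
move/inL_nth=> [x [[_ Mx] [j wx]]]; apply/alt_le_finP.
have eq_dtail : (forall i, i < size w -> nth 0 w i = d i.+1) -> alt_le_fin w (dtail (size w)).
  move=> wd; left; apply: (@eq_from_nth _ 0) => [|i hi]; first by rewrite size_mkseq.
  by rewrite wd // nth_mkseq.
case: (Mx j) => [dx|[[|k] [dx dx_lt]]].
- by apply: eq_dtail => i hi; rewrite (dx i.+1) /shift -(wx i.+1).
- by move: dx_lt; rewrite /shift -(wx 0) //= ltnn.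
- case: (ltnP k (size w)) => hk; last first.
    by apply: eq_dtail => i hi; rewrite (dx i.+1) /shift -?(wx i.+1) //; lia.
  right; split; first by rewrite size_mkseq.
  exists k; split=> //; split.
    by move=> i hi; rewrite nth_mkseq ?(dx i.+1) /shift -?(wx i.+1) //=; lia.
  by move: dx_lt; rewrite /shift -(wx k.+1) //= nth_mkseq //; case: (odd k).
Qed.

Hypothesis lyndon : alt_lyndon d.

Lemma inM_lyndon : inM d d.
Proof.
split=> [n|]; last exact: lyndon.
case: (lyndon n) => [dn|[[|k] [dn dn_lt]]].
- by move: (dn 0); rewrite /shift addn0 => ->.
- by move: dn_lt; rewrite /shift addn0 => /ltnW.
- by move: (dn 0 erefl); rewrite /shift addn0 => ->.
Qed.

Lemma inL_cons_d0 w : inL d w -> altle w (dtail (size w)) -> inL d (d 0 :: w).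
Proof.
move=> /inL_nth[x [Mx [j wx]]] /alt_le_finP[wd|[_ [k [hk [wd wd_lt]]]]].
- apply/inL_nth; exists d; split; first exact: inM_lyndon.
  by exists 0; case=> [|i] hi //=; rewrite {1}wd nth_mkseq.
- apply/inL_nth; exists (cons_suffix (d 0) x j); split; last first.
    by exists 0; case=> [|i] //= hi; rewrite wx.
  apply: inM_cons_suffix => //; right; exists k.+1; split.
    by case=> [|i] //= hi; rewrite -wx ?wd ?nth_mkseq //; lia.
  by move: wd_lt; rewrite /= -wx // nth_mkseq //; case: (odd k).
Qed.

Lemma inLb_cons_lt c w : c < d 0 -> inLb (c :: w) = inLb w.
Proof. by move=> c_lt; apply/inLbP/inLbP; [exact: inL_behead | exact: inL_cons_lt]. Qed.

Lemma inLb_cons_d0 w : inLb (d 0 :: w) = inLb w && altle w (dtail (size w)).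
Proof.
apply/inLbP/andP => [Lw|[/inLbP Lw wd]]; last exact: inL_cons_d0.
by split; [apply/inLbP; exact: inL_behead Lw | exact: inL_cons_d0_altle].
Qed.

End Language.

Lemma sum_ord_ltn D x : \sum_(c < D) (x < c) = D - x.+1.
Proof. by elim: D => [|D IH]; rewrite ?big_ord0 // big_ord_recr /= IH; lia. Qed.

Lemma sum_ord_eqn D x : \sum_(c < D) (c == x :> nat) = (x < D).
Proof. by elim: D => [|D IH]; rewrite ?big_ord0 // big_ord_recr /= IH; lia. Qed.

Section Counting.

Variable d : nat -> nat.
Hypothesis lyndon : alt_lyndon d.

Definition Hc (m : nat) : nat := nwords (d 0) m (inLb d).

Definition Nle (m : nat) (X : seq nat) : nat :=
  nwords (d 0) m (fun w => inLb d w && altle w X).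

Definition Nge (m : nat) (X : seq nat) : nat :=
  nwords (d 0) m (fun w => inLb d w && altle X w).

Definition Nbetween (m : nat) (A B : seq nat) : nat :=
  nwords (d 0) m (fun w => [&& inLb d w, altle A w & altle w B]).

Lemma Nle_add_Nge X : inL d X -> Nle (size X) X + Nge (size X) X = Hc (size X) + 1.
Proof.
move=> LX; rewrite -(nwords_pred1 (inL_letter_bound LX)); apply: nwords_add => w wX /=.
case: (inLbP d w) => [_|Lw]; first exact: altle_split.
by case: eqP => // wX'; rewrite wX' in Lw.
Qed.

Lemma Nle_interval A B : inL d A -> altle A B ->
  Nle (size A) B + 1 = Nbetween (size A) A B + Nle (size A) A.
Proof.
move=> LA AB; rewrite -(nwords_pred1 (inL_letter_bound LA)); apply: nwords_add => w wA /=.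
case: (inLbP d w) => [_|Lw]; first exact: altle_between.
by case: eqP => // wA'; rewrite wA' in Lw.
Qed.

Lemma nwords_slice_lt m c x X : c < d 0 -> size X = m ->
  nwords (d 0) m (fun w => inLb d (c :: w) && altle (c :: w) (x :: X)) =
  (x < c) * Hc m + (c == x) * Nge m X.
Proof.
move=> c_lt sX; case: ltngtP => [xc|cx|->]; rewrite ?mul0n ?mul1n ?addn0 ?add0n.
- by apply: nwords_ext => w wm; rewrite inLb_cons_lt // altle_cons wm sX eqxx xc andbT.
- rewrite -[RHS](nwords_pred0 (d 0) m); apply: nwords_ext => w _.
  by rewrite altle_cons ltnNge ltnW // (ltn_eqF cx) !andbF.
- rewrite /Nge; apply: nwords_ext => w wm.
  by rewrite inLb_cons_lt // altle_cons wm sX !eqxx ltnn.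
Qed.

Lemma nwords_slice_d0 m x X : x <= d 0 -> size X = m ->
  nwords (d 0) m (fun w => inLb d (d 0 :: w) && altle (d 0 :: w) (x :: X)) =
  (x < d 0) * Nle m (dtail d m) + (x == d 0) * Nbetween m X (dtail d m).
Proof.
move=> x_le sX; case: ltngtP x_le => // [xd|->] _; rewrite ?mul0n ?mul1n ?addn0 ?add0n.
- apply: nwords_ext => w wm.
  by rewrite inLb_cons_d0 // altle_cons wm sX eqxx xd andbT.
- apply: nwords_ext => w wm.
  by rewrite inLb_cons_d0 // altle_cons wm sX !eqxx ltnn /= andbAC -andbA.
Qed.

Lemma Nle_cons m x X : size X = m -> inL d (x :: X) ->
  Nle m.+1 (x :: X) + Nle m X = (d 0 - x) * Hc m + Nle m (dtail d m) + 1.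
Proof.
move=> sX LxX; have /andP[x_le _] := inL_letter_bound LxX.
have LX := inL_behead LxX.
have total := Nle_add_Nge LX; rewrite sX in total.
rewrite {1}/Nle nwords_cons big_ord_recr /=.
rewrite (eq_bigr _ (fun c _ => nwords_slice_lt x (ltn_ord c) sX)) big_split /=.
rewrite -!big_distrl /= sum_ord_ltn sum_ord_eqn nwords_slice_d0 //.
case: ltngtP x_le => // [xd|xd] _.
- by rewrite -[d 0 - x](subnSK xd) mulSn; lia.
- rewrite xd in LxX *; rewrite subnn.
  have := Nle_interval LX (inL_cons_d0_altle LxX); rewrite sX; lia.
Qed.

End Counting.

Lemma Hcount_Hc d m : Hcount d m = Hc d m.
Proof. exact: card_nwords. Qed.

Lemma Gamma_Nbetween d A B n : Gamma d A B n = Nbetween d n A B.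
Proof.
rewrite /Gamma /Nbetween -card_nwords; congr #|pred_of_set _|; apply/setP => w; rewrite !inE.
apply/pdecP/and3P => [[Lw [Aw wB]]|[/pdecP Lw Aw wB]].
  by split; [exact/pdecP | exact/alt_le_finP | exact/alt_le_finP].
by split=> //; split; exact/alt_le_finP.
Qed.

Import GRing.Theory Num.Theory.
Local Open Scope ring_scope.

Definition alt_sum d m (X : seq nat) : int :=
  \sum_(i < m) (-1) ^+ i.+1 * (nth 0%N X i)%:Z * (Hc d (m - i.+1))%:Z.

Lemma alt_sum_cons d m x X :
  alt_sum d m.+1 (x :: X) = - (x%:Z * (Hc d m)%:Z) - alt_sum d m X.
Proof.
rewrite /alt_sum big_ord_recl /= subn1 expr1 mulN1r -sumrN mulNr; congr (_ + _).
by apply: eq_bigr => i _; rewrite subSS exprS; ring.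
Qed.

Lemma Nle_affine d m : alt_lyndon d -> exists K : int,
  forall X, size X = m -> inL d X -> (Nle d m X)%:Z = alt_sum d m X + K.
Proof.
move=> lyndon; elim: m => [|m [K IH]].
  by exists (Nle d 0 [::])%:Z => -[|//] _ _; rewrite /alt_sum big_ord0 add0r.
exists ((d 0)%:Z * (Hc d m)%:Z + (Nle d m (dtail d m))%:Z + 1 - K).
move=> [//|x X] [sX] LxX; have /andP[x_le _] := inL_letter_bound LxX.
have := congr1 Posz (Nle_cons lyndon sX LxX); rewrite !PoszD PoszM -subzn //.
have := IH X sX (inL_behead LxX); rewrite alt_sum_cons mulrBl; lra.
Qed.

Theorem lemma1 (d : nat -> nat) (n : nat) (A B : seq nat) :
  alt_lyndon d ->
  size A = n -> size B = n ->
  inL d A -> inL d B ->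
  alt_lt_fin A B ->
  (Gamma d A B n)%:Z =
    \sum_(i < n) (-1) ^+ i.+1 * ((nth 0%N B i)%:Z - (nth 0%N A i)%:Z)
                   * (Hcount d (n - i.+1))%:Z + 1.
Proof.
move=> lyndon sA sB LA LB A_lt_B.
have AB : altle A B by apply/alt_le_finP; right.
have [K NleE] := Nle_affine n lyndon.
have -> : \sum_(i < n) (-1) ^+ i.+1 * ((nth 0%N B i)%:Z - (nth 0%N A i)%:Z)
            * (Hcount d (n - i.+1))%:Z = alt_sum d n B - alt_sum d n A.
  by rewrite /alt_sum -sumrB; apply: eq_bigr => i _; rewrite Hcount_Hc; ring.
have := congr1 Posz (Nle_interval LA AB); rewrite sA Gamma_Nbetween !PoszD.
have := NleE A sA LA; have := NleE B sB LB; lra.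
Qed.
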